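(* For every parameter $(\alpha,\theta,\nu)$ where $\nu$ is a probability distribution on the positive integers and either ($0<\alpha<1$ and $\theta>-\alpha$) or ($\alpha<0$ and $\theta=-k\alpha$ for some positive integer $k$), the Hollywood process $(\mathcal{Y}_n)_{n\ge1}$ with parameter $(\alpha,\theta,\nu)$ determines an edge exchangeable probability distribution on $\mathfrak{E}_{\mathbb{N}}$.
   Context: $\mathrm{fin}(\mathcal{P})$ is the set of finite sequences of elements of $\mathcal{P}$. An interaction process $\mathcal{I}:S\to\mathrm{fin}(\mathcal{P})$ ($S\subseteq\mathbb{N}$) induces the edge-labeled network $\mathcal{E}_{\mathcal{I}}$: the equivalence class of $\mathcal{I}$ under relabeling vertices by bijections $\rho$ of the population (acting entrywise on each sequence), keeping edge labels $i\in S$. $\mathfrak{E}_S$ is the set of such networks; restriction to $S'\subseteq S$ deletes edges labeled outside $S'$. For a permutation $\sigma$ of $S$, $\mathcal{E}^\sigma$ is induced by $\mathcal{I}^\sigma(i)=\mathcal{I}(\sigma^{-1}(i))$. A random $\mathcal{Y}\in\mathfrak{E}_S$ is edge exchangeable if $\mathcal{Y}^\sigma$ has the same distribution as $\mathcal{Y}$ for every permutation $\sigma:S\to S$. Hollywood process with parameter $(\alpha,\theta,\nu)$: generate $X_1,X_2,\dots$ as follows. For each $n$, independently draw $K_n\sim\nu$; given $K_n=k$ choose $X_{n,1},\dots,X_{n,k}$ sequentially. Let $V_n(j)$ be the number of distinct labels among $X_1,\dots,X_{n-1},X_{n,1},\dots,X_{n,j-1}$ (labels are $1,2,\dots$ assigned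 in order of first appearance), and for $i\le V_n(j)$ let $D_{n,j}(i)$ be the number of occurrences of label $i$ among these. Then $\mathrm{pr}(X_{n,j}=i\mid\text{past})\propto D_{n,j}(i)-\alpha$ for $i=1,\dots,V_n(j)$ and $\propto\theta+\alpha V_n(j)$ for $i=V_n(j)+1$. Set $X_n=(X_{n,1},\dots,X_{n,K_n})$, $\mathcal{X}_n:[n]\to\mathrm{fin}(\mathbb{N})$, $\mathcal{X}_n(i)=X_i$, and $\mathcal{Y}_n=\mathcal{E}_{\mathcal{X}_n}\in\mathfrak{E}_{[n]}$. The $\mathcal{Y}_n$ are consistent under restriction and define a random element of $\mathfrak{E}_{\mathbb{N}}$. *)

From HB Require Import structures.
From mathcomp Require Import all_boot all_order all_algebra.
From mathcomp Require Import classical_sets reals constructive_ereal ereal esum.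
Set Implicit Arguments. Unset Strict Implicit. Unset Printing Implicit Defensive.
Import Order.TTheory GRing.Theory Num.Theory.
Local Open Scope ring_scope.

(* Population P = nat.  An interaction process on the edge-label set
   [n] = {0,...,n-1} (0-based) is a sequence of length n of finite
   sequences of elements of nat: edge i carries (nth [::] I i). *)
Definition iproc := seq (seq nat).

(* Two interaction processes induce the same edge-labeled network iff one
   is obtained from the other by relabeling vertices by a bijection rho of
   the population, acting entrywise; edge labels are kept. *)
Definition same_network (I J : iproc) : Prop :=
  exists rho : nat -> nat, bijective rho /\ J = map (map rho) I.

Section Hollywood.
Variables (R : realType) (alpha theta : R) (nu : nat -> R).

(* Unnormalized weight of choosing label x given the flattened past
   sequence of labels; labels are 0,1,2,... in order of first appearance,
   V = number of distinct labels so far, D(i) = count of i in the past. *)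
Definition hw_weight (past : seq nat) (x : nat) : R :=
  let V := size (undup past) in
  if (x < V)%N then (count_mem x past)%:R - alpha
  else if (x == V)%N then theta + alpha * V%:R else 0.

(* Normalized choice probability ("proportional to" the weights).  With an
   empty past the only possible label is the new one, chosen w.p. 1. *)
Definition hw_choice (past : seq nat) (x : nat) : R :=
  if past is [::] then (x == 0)%:R
  else hw_weight past x /
       (\sum_(i < (size (undup past)).+1) hw_weight past i).

Fixpoint hw_edge_prob (past : seq nat) (x : seq nat) : R :=
  if x is a :: x' then hw_choice past a * hw_edge_prob (rcons past a) x'
  else 1.

(* Probability of a history X_1, ..., X_m (K_n ~ nu independently). *)
Fixpoint hw_hist_prob_aux (past : seq nat) (h : iproc) : R :=
  if h is x :: h' then
    nu (size x) * hw_edge_prob past x * hw_hist_prob_aux (past ++ x) h'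
  else 1.

Definition hw_hist_prob (h : iproc) : R := hw_hist_prob_aux [::] h.

(* pr(Y_n = class of y), where Y_n is the network induced by X_1..X_n. *)
Definition hw_law (n : nat) (y : iproc) : \bar R :=
  \esum_(h in [set h : iproc | size h = n /\ same_network h y])
     (hw_hist_prob h)%:E.

(* pr( (Y^sigma restricted to [n]) = class of y ), computed from the first
   m edges X_1..X_m, where tau = sigma^{-1} and tau i < m for all i < n:
   I^sigma(i) = I(sigma^{-1} i). *)
Definition hw_law_perm (tau : nat -> nat) (n m : nat) (y : iproc) : \bar R :=
  \esum_(h in [set h : iproc | size h = m /\
            same_network [seq nth [::] h (tau i) | i <- iota 0 n] y])
     (hw_hist_prob h)%:E.

End Hollywood.

Definition prob_on_pos (R : realType) (nu : nat -> R) : Prop :=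
  nu 0 = 0 /\ (forall k, 0 <= nu k) /\
  (\esum_(k in [set: nat]) (nu k)%:E = 1%E).

Definition hw_param (R : realType) (alpha theta : R) : Prop :=
  (0 < alpha < 1 /\ - alpha < theta) \/
  (alpha < 0 /\ exists k : nat, (0 < k)%N /\ theta = - (k%:R * alpha)).

(* For a history whose vertex labels appear in order of first appearance
   (the canonical representative of its network) the sequential choice rule
   multiplies out to
     prod_i nu(K_i) * prod_(1 <= j < V) (theta + j alpha)
       * prod_v prod_(1 <= c < d_v) (c - alpha) / prod_(1 <= t < N) (theta + t),
   with V vertices of degrees d_v and N vertex slots in total.  This depends
   only on the multiset of edges up to relabelling, so the probability of the
   network of a history is invariant under reordering the edges.  Under the
   parameter constraints every choice probability is nonnegative and they sum
   to one, so the edges after the first n can be summed out.  Extending tau to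
   a permutation of the first m edges then identifies the law of the permuted
   network restricted to [n] with the law of Y_n. *)

From HB Require Import structures.
From mathcomp Require Import all_boot all_order all_algebra.
From mathcomp Require Import classical_sets boolp functions reals constructive_ereal ereal esum sequences.
From mathcomp Require Import ring lra.
Import Order.TTheory GRing.Theory Num.Theory.
Set Implicit Arguments. Unset Strict Implicit. Unset Printing Implicit Defensive.

Local Notation relabel rho := (map (map rho)).

Fixpoint canonical_from (p s : seq nat) : bool :=
  if s is a :: s' then (a <= size (undup p))%N && canonical_from (rcons p a) s'
  else true.

Definition canonical (s : seq nat) : bool := canonical_from [::] s.

Lemma canonical_from_cat p s t :
  canonical_from p (s ++ t) = canonical_from p s && canonical_from (p ++ s) t.
Proof.
elim: s p => [|a s IH] p /=; first by rewrite cats0.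
by rewrite IH cat_rcons andbA.
Qed.

Lemma canonical_rcons s a : canonical (rcons s a) = canonical s && (a <= size (undup s))%N.
Proof. by rewrite /canonical -cats1 canonical_from_cat /= andbT. Qed.

Lemma size_undup_rcons (s : seq nat) (a : nat) :
  size (undup (rcons s a)) = (size (undup s) + (a \notin s))%N.
Proof.
rewrite undup_rcons size_rcons size_filter.
have -> : count (predC1 a) (undup s) = (size (undup s) - (a \in s))%N.
  rewrite -(count_predC (pred1 a) (undup s)) count_uniq_mem ?undup_uniq //.
  by rewrite mem_undup addKn.
case: (boolP (a \in s)) => [ain|_]; last by rewrite subn0 addn1.
rewrite addn0 subn1 prednK // lt0n size_eq0.
by apply: contraTneq ain => e; rewrite -mem_undup e.
Qed.

Lemma canonical_mem s : canonical s -> forall x, (x \in s) = (x < size (undup s))%N.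
Proof.
elim/last_ind: s => [|s a IH] //; rewrite canonical_rcons => /andP[cs ha] x.
rewrite size_undup_rcons -cats1 mem_cat inE.
case ain: (a \in s) => /=.
  rewrite addn0 -(IH cs); case: (x =P a) => [->|_]; by rewrite ?ain ?orbT ?orbF.
have aV : a = size (undup s) by apply/eqP; rewrite eqn_leq ha leqNgt -(IH cs) ain.
by rewrite addn1 ltnS leq_eqVlt (IH cs) -aV orbC.
Qed.

Lemma canonical_new_label s a : canonical s -> (a <= size (undup s))%N -> a \notin s ->
  a = size (undup s).
Proof. by move=> cs ha ain; apply/eqP; rewrite eqn_leq ha leqNgt -(canonical_mem cs). Qed.

Lemma canonical_relabel_id (rho : nat -> nat) (s : seq nat) :
  injective rho -> canonical s -> canonical (map rho s) -> map rho s = s.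
Proof.
move=> rho_inj; elim/last_ind: s => [//|s a IH].
rewrite map_rcons !canonical_rcons => /andP[cs ha] /andP[crs hr].
have e := IH cs crs; rewrite e in hr *; congr rcons.
have fix_s : {in s, rho =1 id} by apply/eq_in_map; rewrite map_id.
case ain: (a \in s); first by rewrite fix_s.
have rho_a : rho a \notin s.
  by apply/negP => h; have /rho_inj ra := fix_s _ h; move: h; rewrite ra ain.
by rewrite (canonical_new_label cs hr rho_a) (canonical_new_label cs ha (negbT ain)).
Qed.

Definition swapn (u v x : nat) : nat :=
  if x == u then v else if x == v then u else x.

Lemma swapnK u v : involutive (swapn u v).
Proof.
move=> x; rewrite /swapn.
case: (x =P u) => [->|xu]; first by rewrite eqxx; case: (v =P u) => [->|].
case: (x =P v) => [->|xv]; first by rewrite eqxx.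
by move/eqP/negPf: xu => ->; move/eqP/negPf: xv => ->.
Qed.

Lemma exists_canonical_relabeling (s : seq nat) :
  exists rho : nat -> nat, bijective rho /\ canonical (map rho s).
Proof.
elim/last_ind: s => [|s a [rho [rho_bij cs]]]; first by exists id; split => //; exists id.
case ain: (a \in s).
  exists rho; split => //; rewrite map_rcons canonical_rcons cs /=.
  by apply: ltnW; rewrite -(canonical_mem cs) map_f.
set t := map rho s; set V := size (undup t).
have rho_a : rho a \notin t by rewrite (mem_map (bij_inj rho_bij)) ain.
(* send the new label [rho a] to the next free one, [V]; labels of [t] are [< V] *)
exists (swapn V (rho a) \o rho); split.
  by apply: bij_comp => //; exists (swapn V (rho a)); exact: swapnK.
rewrite map_rcons; have -> : map (swapn V (rho a) \o rho) s = t.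
  rewrite map_comp -[RHS]map_id; apply/eq_in_map => x xt; rewrite /swapn.
  have := xt; rewrite (canonical_mem cs) => xV.
  rewrite ifF; last by apply/negbTE; rewrite neq_ltn xV.
  by rewrite ifF //; apply/negbTE; apply: contraNneq rho_a => <-; exact: xt.
by rewrite canonical_rcons cs /= /swapn eqxx; case: ifP => // /eqP ->.
Qed.

Lemma same_network_relabel (rho : nat -> nat) (h : iproc) :
  bijective rho -> same_network h (relabel rho h).
Proof. by move=> rho_bij; exists rho. Qed.

Lemma same_network_sym h1 h2 : same_network h1 h2 -> same_network h2 h1.
Proof.
move=> [rho [[g rhoK gK] ->]]; exists g; split; first by exists rho.
by rewrite (mapK (mapK rhoK)).
Qed.

Lemma same_network_trans h1 h2 h3 :
  same_network h1 h2 -> same_network h2 h3 -> same_network h1 h3.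
Proof.
move=> [r1 [b1 ->]] [r2 [b2 ->]]; exists (r2 \o r1); split; first exact: bij_comp.
by rewrite -map_comp; apply: eq_map => x /=; rewrite -map_comp.
Qed.

Lemma same_network_size h1 h2 : same_network h1 h2 -> size h2 = size h1.
Proof. by move=> [rho [_ ->]]; rewrite size_map. Qed.

Lemma nth_relabel (rho : nat -> nat) (h : iproc) i :
  nth [::] (relabel rho h) i = map rho (nth [::] h i).
Proof.
case: (ltnP i (size h)) => hi; first by rewrite (nth_map [::]).
by rewrite !nth_default ?size_map.
Qed.

Lemma same_network_canonical_eq h1 h2 : canonical (flatten h1) -> canonical (flatten h2) ->
  same_network h1 h2 -> h1 = h2.
Proof.
move=> c1 c2 [rho [rho_bij eh2]]; rewrite eh2 -map_flatten in c2; rewrite eh2.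
have fix_h1 : {in flatten h1, rho =1 id}.
  by apply/eq_in_map; rewrite map_id; exact: canonical_relabel_id (bij_inj rho_bij) c1 c2.
rewrite -[LHS]map_id; apply/eq_in_map => x xh /=.
rewrite -[LHS]map_id; apply/eq_in_map => a ax /=.
by rewrite fix_h1 //; apply/flattenP; exists x.
Qed.

Definition canonical_relabeling (h : iproc) : nat -> nat :=
  proj1_sig (cid (exists_canonical_relabeling (flatten h))).

Definition canonical_rep (h : iproc) : iproc := relabel (canonical_relabeling h) h.

Lemma canonical_relabeling_bij h : bijective (canonical_relabeling h).
Proof. by rewrite /canonical_relabeling; case: cid => rho []. Qed.

Lemma same_network_canonical_rep h : same_network h (canonical_rep h).
Proof. exact: same_network_relabel (canonical_relabeling_bij h). Qed.

Lemma canonical_rep_canonical h : canonical (flatten (canonical_rep h)).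
Proof. by rewrite /canonical_rep -map_flatten /canonical_relabeling; case: cid => rho []. Qed.

Lemma size_canonical_rep h : size (canonical_rep h) = size h.
Proof. exact: size_map. Qed.

Lemma canonical_flatten_take n h : canonical (flatten h) -> canonical (flatten (take n h)).
Proof.
by rewrite -{1}(cat_take_drop n h) flatten_cat /canonical canonical_from_cat => /andP[].
Qed.

Section ExtendedSums.
Variable R : realType.
Local Open Scope ring_scope.
Local Open Scope ereal_scope.

Lemma esum_restrict (T : choiceType) (A B : set T) (f : T -> \bar R) :
  (forall x, A x -> ~ B x -> f x = 0) ->
  \esum_(x in A) f x = \esum_(x in A `&` B) f x.
Proof.
move=> fz; rewrite esum_mkcondr; apply: eq_esum => x Ax.
by case: (boolP (x \in B)) => // /negP nB; rewrite fz // => /mem_set.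
Qed.

Lemma esum_size0 (T : choiceType) (f : seq T -> \bar R) : 0 <= f [::] ->
  \esum_(s in [set s : seq T | size s = 0%N]) f s = f [::].
Proof.
move=> f0; rewrite -[RHS](esum_set1 f0); congr esum.
by apply/seteqP; split => s /=; [move/size0nil | move->].
Qed.

Lemma esum_size_succ (T : choiceType) k (f : seq T -> \bar R) : (forall s, 0 <= f s) ->
  \esum_(s in [set s : seq T | size s = k.+1]) f s =
  \esum_(a in [set: T]) \esum_(r in [set r : seq T | size r = k]) f (a :: r).
Proof.
move=> f0; rewrite esum_esum; last by move=> *; exact: f0.
apply: (reindex_esum _ _ (fun p => p.1 :: p.2)); split.
- by move=> [a r] /= [_ hr]; rewrite /= hr.
- by move=> [a r] [b t] /= _ _ [-> ->].
- by move=> [|a r] //= [hr]; exists (a, r).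
Qed.

Lemma esum_by_size (T : choiceType) (f : seq T -> \bar R) : (forall s, 0 <= f s) ->
  \esum_(s in [set: seq T]) f s =
  \esum_(k in [set: nat]) \esum_(s in [set s : seq T | size s = k]) f s.
Proof.
move=> f0; rewrite esum_esum; last by move=> *; exact: f0.
apply: (reindex_esum _ _ snd); split => //.
- by move=> [k x] [l y] /set_mem [_ /= <-] /set_mem [_ /= <-] /= ->.
- by move=> x _; exists (size x, x).
Qed.

Lemma esum_nat_finite_support (f : nat -> \bar R) N : (forall a, 0 <= f a) ->
  (forall a, (N <= a)%N -> f a = 0) ->
  \esum_(a in [set: nat]) f a = \sum_(a < N) f a.
Proof.
move=> f0 fz; rewrite -nneseries_esumT // (nneseries_split 0 N) //.
rewrite add0n eseries0 ?adde0 ?big_mkord // => i hi _; exact: fz.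
Qed.

Lemma esumZl_nat (c : R) (f : nat -> \bar R) : (0 <= c)%R -> (forall k, 0 <= f k) ->
  \esum_(k in [set: nat]) (c%:E * f k) = c%:E * \esum_(k in [set: nat]) f k.
Proof.
move=> c0 f0; rewrite -!nneseries_esumT //; first exact: nneseriesZl.
by move=> n; apply: mule_ge0.
Qed.

End ExtendedSums.

Lemma exists_perm_extension (tau : nat -> nat) n m : injective tau ->
  (forall i, (i < n)%N -> (tau i < m)%N) ->
  exists2 L : seq nat, perm_eq L (iota 0 m) & take n L = map tau (iota 0 n).
Proof.
move=> tau_inj tau_lt; set L0 := map tau (iota 0 n).
have uL0 : uniq L0 by rewrite map_inj_uniq ?iota_uniq.
have L0_lt x : x \in L0 -> (x < m)%N.
  by case/mapP => i; rewrite mem_iota add0n => /andP[_ /tau_lt] ? ->.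
set L1 := [seq i <- iota 0 m | i \notin L0].
exists (L0 ++ L1); last by rewrite take_size_cat ?size_map ?size_iota.
apply: uniq_perm; rewrite ?iota_uniq //.
- rewrite cat_uniq uL0 /L1 filter_uniq ?iota_uniq ?andbT //=.
  by apply/hasPn => x; rewrite mem_filter => /andP[].
- move=> x; rewrite mem_cat /L1 mem_filter mem_iota /= add0n.
  by case: (boolP (x \in L0)) => /= hx; rewrite ?(L0_lt _ hx).
Qed.

Section Reorder.
Variables (m : nat) (L : seq nat).
Hypothesis L_perm : perm_eq L (iota 0 m).

Definition reorder (g : iproc) : iproc := map (nth [::] g) L.

Lemma reorder_relabel (rho : nat -> nat) g : reorder (relabel rho g) = relabel rho (reorder g).
Proof. by rewrite /reorder -map_comp; apply: eq_map => i; rewrite /= nth_relabel. Qed.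

Lemma size_reorder g : size (reorder g) = m.
Proof. by rewrite size_map (perm_size L_perm) size_iota. Qed.

Lemma perm_reorder g : size g = m -> perm_eq (reorder g) g.
Proof. by move=> sg; rewrite -{2}(mkseq_nth [::] g) sg; exact: perm_map. Qed.

Let mem_L i : (i \in L) = (i < m)%N.
Proof. by rewrite (perm_mem L_perm) mem_iota. Qed.

Lemma reorder_inj g1 g2 : size g1 = m -> size g2 = m -> reorder g1 = reorder g2 -> g1 = g2.
Proof.
move=> s1 s2 e; apply: (@eq_from_nth _ [::]) => [|i]; first by rewrite s1 s2.
rewrite s1 -mem_L => iL.
have := congr1 (nth [::] ^~ (index i L)) e.
by rewrite /reorder !(nth_map 0%N) ?index_mem // nth_index.
Qed.

Lemma reorder_onto h : size h = m -> exists2 g, size g = m & reorder g = h.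
Proof.
move=> sh; have uL : uniq L by rewrite (perm_uniq L_perm) iota_uniq.
have sL : size L = m by rewrite (perm_size L_perm) size_iota.
exists (map (fun i => nth [::] h (index i L)) (iota 0 m)); first by rewrite size_map size_iota.
apply: (@eq_from_nth _ [::]) => [|k]; first by rewrite size_reorder.
rewrite size_reorder => km; have Lk : (nth 0%N L k < m)%N by rewrite -mem_L mem_nth ?sL.
by rewrite /reorder (nth_map 0%N) ?sL // (nth_map 0%N) ?size_iota // nth_iota // index_uniq ?sL.
Qed.

End Reorder.

Lemma sum_count_mem N (p : seq nat) : (forall x, x \in p -> (x < N)%N) ->
  (\sum_(i < N) count_mem (i : nat) p)%N = size p.
Proof.
elim: p => [|a p IH] p_lt /=; first by rewrite big1.
rewrite big_split /= IH => [|x xp]; last by apply: p_lt; rewrite inE xp orbT.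
have aN : (a < N)%N by apply: p_lt; rewrite mem_head.
rewrite (bigD1 (Ordinal aN)) //= eqxx big1 ?add1n // => i ine.
by case: eqP => // ai; case/eqP: ine; apply: val_inj; rewrite /= ai.
Qed.

Section Hollywood.
Variables (R : realType) (alpha theta : R) (nu : nat -> R).
Hypothesis hp : hw_param alpha theta.
Local Open Scope ring_scope.

Local Notation weight := (hw_weight alpha theta).
Local Notation choice := (hw_choice alpha theta).
Local Notation edge := (hw_edge_prob alpha theta).
Local Notation hist := (hw_hist_prob_aux alpha theta nu).
Local Notation V s := (size (undup s)).

Lemma theta_add_gt0 N : (0 < N)%N -> 0 < N%:R + theta.
Proof.
move=> N0; have : 1 <= N%:R :> R by rewrite ler1n.
case: hp => [[/andP[a0 a1] ht]|[a0 [k [k0 ->]]]]; first lra.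
have : 1 <= k%:R :> R by rewrite ler1n.
nra.
Qed.

Lemma hw_edge_prob_cat p x y : edge p (x ++ y) = edge p x * edge (p ++ x) y.
Proof.
elim: x p => [|a x IH] p /=; first by rewrite mul1r cats0.
by rewrite IH cat_rcons mulrA.
Qed.

Lemma hw_edge_prob_rcons p s a : edge p (rcons s a) = edge p s * choice (p ++ s) a.
Proof. by rewrite -cats1 hw_edge_prob_cat /= mulr1. Qed.

Lemma hw_hist_prob_auxE p h :
  hist p h = (\prod_(x <- h) nu (size x)) * edge p (flatten h).
Proof.
elim: h p => [|x h IH] p /=; first by rewrite big_nil mul1r.
by rewrite IH big_cons hw_edge_prob_cat; ring.
Qed.

Lemma hw_hist_prob_aux_cat p h1 h2 : hist p (h1 ++ h2) = hist p h1 * hist (p ++ flatten h1) h2.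
Proof.
elim: h1 p => [|x h1 IH] p /=; first by rewrite mul1r cats0.
by rewrite IH catA !mulrA.
Qed.

Lemma hw_choice_out p a : (V p < a)%N -> choice p a = 0.
Proof.
case: p => [|b p] pa /=; first by case: a pa.
by rewrite /hw_weight gtn_eqF // ltnNge ltnW // mul0r.
Qed.

Lemma hw_edge_prob_noncanonical p x : ~~ canonical_from p x -> edge p x = 0.
Proof.
elim: x p => [|a x IH] p //=; rewrite negb_and => /orP[h|h].
  by rewrite hw_choice_out ?mul0r // ltnNge.
by rewrite IH ?mulr0.
Qed.

Lemma hw_weight_sum p : canonical p -> p != [::] ->
  \sum_(i < (V p).+1) weight p i = (size p)%:R + theta.
Proof.
move=> cp pn; rewrite big_ord_recr /=.
under eq_bigr => i _ do rewrite /hw_weight ltn_ord.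
rewrite sumrB -natr_sum sum_count_mem => [|x]; last by rewrite (canonical_mem cp).
by rewrite sumr_const card_ord /hw_weight ltnn eqxx -mulr_natr; ring.
Qed.

Lemma hw_choiceE p a : p != [::] -> canonical p ->
  choice p a = weight p a / ((size p)%:R + theta).
Proof. by case: p => // b p _ cp; rewrite /hw_choice hw_weight_sum. Qed.

Definition degree_weight (d : nat) : R := \prod_(1 <= c < d) (c%:R - alpha).

Lemma degree_weightS d : (0 < d)%N -> degree_weight d.+1 = degree_weight d * (d%:R - alpha).
Proof. by move=> d0; rewrite /degree_weight big_nat_recr. Qed.

Definition hw_numer (s : seq nat) : R :=
  (\prod_(1 <= j < V s) (theta + alpha * j%:R)) *
  \prod_(l <- undup s) degree_weight (count_mem l s).

Definition hw_denom (N : nat) : R := \prod_(1 <= t < N) (t%:R + theta).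

Lemma hw_numer_canonical s : canonical s -> hw_numer s =
  (\prod_(1 <= j < V s) (theta + alpha * j%:R)) *
  \prod_(l < V s) degree_weight (count_mem (l : nat) s).
Proof.
move=> cs; rewrite /hw_numer -(big_mkord xpredT (fun l => degree_weight (count_mem l s))).
congr (_ * _); apply: perm_big; apply: uniq_perm; rewrite ?undup_uniq ?iota_uniq // => x.
by rewrite mem_undup mem_index_iota (canonical_mem cs).
Qed.

Lemma hw_numer_rcons s a : canonical (rcons s a) -> s != [::] ->
  hw_numer (rcons s a) = hw_numer s * weight s a.
Proof.
rewrite canonical_rcons => /andP[cs ha] sn.
have V0 : (0 < V s)%N.
  case: s sn cs {ha} => // b s' _ cs.
  by apply: leq_ltn_trans (leq0n b) _; rewrite -(canonical_mem cs) mem_head.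
have cnt l : count_mem l (rcons s a) = (count_mem l s + (a == l))%N.
  by rewrite -cats1 count_cat /= addn0.
rewrite !hw_numer_canonical ?canonical_rcons ?cs ?ha // size_undup_rcons.
case ain: (a \in s) => /=.
  have aV : (a < V s)%N by rewrite -(canonical_mem cs).
  rewrite addn0 /hw_weight aV -mulrA; congr (_ * _).
  rewrite (bigD1 (Ordinal aV)) //= [in RHS](bigD1 (Ordinal aV)) //= cnt eqxx addn1.
  rewrite degree_weightS; last by rewrite -has_count has_pred1 ain.
  have cnt_other (i : 'I_(V s)) :
      i != Ordinal aV -> count_mem (i : nat) (rcons s a) = count_mem (i : nat) s.
    move=> ine; rewrite cnt; case: eqP => [ai|_]; last by rewrite addn0.
    by case/eqP: ine; exact: val_inj.
  under eq_bigr => i ine do rewrite cnt_other //.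
  ring.
have aV := canonical_new_label cs ha (negbT ain); subst a.
rewrite addn1 big_nat_recr //= big_ord_recr /=.
rewrite /hw_weight ltnn eqxx cnt eqxx.
rewrite (eq_bigr (fun i : 'I_(V s) => degree_weight (count_mem (i : nat) s))); last first.
  by move=> i _; rewrite cnt gtn_eqF ?addn0.
have -> : count_mem (V s) s = 0%N by apply/count_memPn; rewrite (canonical_mem cs) ltnn.
have -> : degree_weight (0 + true) = 1 by rewrite /degree_weight big_geq.
ring.
Qed.

Lemma hw_denom_neq0 N : hw_denom N != 0.
Proof.
rewrite /hw_denom big_nat_cond; apply: lt0r_neq0.
apply: (big_ind (fun x => 0 < x)) => //; first exact: mulr_gt0.
by move=> i /andP[/andP[i0 _] _]; apply: theta_add_gt0.
Qed.

Lemma hw_edge_probE s : canonical s -> edge [::] s * hw_denom (size s) = hw_numer s.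
Proof.
elim/last_ind: s => [|s a IH] cs.
  by rewrite /hw_denom /hw_numer /= big_nil !big_geq ?mulr1.
have [s0 | sn] := eqVneq s [::].
  move: cs; rewrite s0 canonical_rcons /= leqn0 => /eqP ->.
  rewrite /hw_denom /hw_numer /degree_weight /= big_cons big_nil !big_geq //.
  by rewrite /hw_choice /= !mulr1.
move: (cs); rewrite canonical_rcons => /andP[cs' _].
have N0 : (0 < size s)%N by rewrite lt0n size_eq0.
rewrite hw_edge_prob_rcons size_rcons /hw_denom big_nat_recr //= -/(hw_denom _).
rewrite hw_numer_rcons // -(IH cs') hw_choiceE //.
have := theta_add_gt0 N0; rewrite lt0r => /andP[hN _].
by field.
Qed.

Lemma hw_numer_relabel_perm (rho : nat -> nat) s s' : injective rho -> perm_eq s s' ->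
  hw_numer (map rho s') = hw_numer s.
Proof.
move=> rho_inj ss'; rewrite /hw_numer undup_map_inj // size_map.
have uss' : perm_eq (undup s) (undup s') by apply/perm_undup/perm_mem.
rewrite -(perm_size uss') big_map [X in _ = _ * X](perm_big (undup s') uss'); congr (_ * _).
apply: eq_bigr => l _; rewrite count_map (permP ss'); congr (degree_weight (count _ _)).
by apply/funext => x /=; rewrite (inj_eq rho_inj).
Qed.

Lemma hw_edge_prob_relabel_perm (rho : nat -> nat) s s' : canonical s ->
  canonical (map rho s') -> injective rho -> perm_eq s s' ->
  edge [::] (map rho s') = edge [::] s.
Proof.
move=> cs crs rho_inj ss'; apply: (mulIf (hw_denom_neq0 (size s))).
rewrite hw_edge_probE // (perm_size ss') -(size_map rho) hw_edge_probE //.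
exact: hw_numer_relabel_perm.
Qed.

(* Invariant making every choice weight nonnegative: the weight [theta + alpha V]
   of a new vertex is nonnegative.  For [alpha < 0, theta = - k alpha] this
   persists because a new vertex has positive weight only while [V < k]. *)
Definition admissible (p : seq nat) : bool :=
  canonical p && ((p == [::]) || (0 <= theta + alpha * (V p)%:R)).

Lemma admissible_nil : admissible [::].
Proof. exact: isT. Qed.

Lemma hw_choice_ge0 p a : admissible p -> 0 <= choice p a.
Proof.
case/andP => cp hg; have [->|pn] := eqVneq p [::]; first by rewrite /hw_choice ler0n.
have p0 : (0 < size p)%N by rewrite lt0n size_eq0.
rewrite hw_choiceE //; apply: divr_ge0; last exact/ltW/theta_add_gt0.
rewrite /hw_weight; case: ifP => ap.
  have : (0 < count_mem a p)%N by rewrite -has_count has_pred1 (canonical_mem cp).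
  rewrite -(ler_nat R) => c1.
  case: hp => [[/andP[_ a1] _]|[a0 _]]; lra.
by case: ifP => // _; move: hg; rewrite (negbTE pn).
Qed.

Lemma admissible_rcons p a : admissible p -> choice p a != 0 -> admissible (rcons p a).
Proof.
move=> /andP[cp hg] hc; have [p0|pn] := eqVneq p [::].
  subst p; have -> : a = 0%N by move: hc; rewrite /hw_choice; case: a => // n; rewrite eqxx.
  rewrite /admissible /=.
  case: hp => [[/andP[a0 _] ht]|[a0 [k [k0 ->]]]]; first lra.
  have : 1 <= k%:R :> R by rewrite ler1n.
  nra.
have ha : (a <= V p)%N by rewrite leqNgt; apply: contra hc => /hw_choice_out ->.
rewrite /admissible canonical_rcons cp ha /=; apply/orP; right; rewrite size_undup_rcons.
case ain: (a \in p) => /=; first by move: hg; rewrite (negbTE pn) addn0.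
rewrite (canonical_new_label cp ha (negbT ain)) in hc *.
have hpos : 0 < theta + alpha * (V p)%:R.
  rewrite lt_neqAle eq_sym; move: hg; rewrite (negbTE pn) /= => ->; rewrite andbT.
  by apply: contra hc; rewrite hw_choiceE // /hw_weight ltnn eqxx => /eqP ->; rewrite mul0r.
case: hp => [[/andP[a0 _] _]|[a0 [k [k0 ek]]]].
  by rewrite natrD mulrDr mulr1; lra.
rewrite ek in hpos *.
have hk : (V p < k)%N.
  rewrite ltnNge; apply/negP; rewrite -(ler_nat R) => hkV; nra.
have : ((V p + 1)%:R <= k%:R :> R) by rewrite ler_nat addn1.
nra.
Qed.

Lemma admissible_cat p x : admissible p -> edge p x != 0 -> admissible (p ++ x).
Proof.
elim: x p => [|a x IH] p ap /=; first by rewrite cats0.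
rewrite mulf_eq0 negb_or => /andP[hc hx].
by rewrite -cat_rcons; apply: IH => //; exact: admissible_rcons.
Qed.

Lemma hw_edge_prob_ge0 p x : admissible p -> 0 <= edge p x.
Proof.
elim: x p => [|a x IH] p ap /=; first exact: ler01.
have [->|hc] := eqVneq (choice p a) 0; first by rewrite mul0r.
by apply: mulr_ge0; [exact: hw_choice_ge0 | exact/IH/admissible_rcons].
Qed.

Hypothesis nu_ge0 : forall k, 0 <= nu k.
Hypothesis nu_sum1 : \esum_(k in [set: nat]) (nu k)%:E = 1%E.

Lemma hw_hist_prob_aux_ge0 p h : admissible p -> 0 <= hist p h.
Proof.
elim: h p => [|x h IH] p ap /=; first exact: ler01.
have [->|hx] := eqVneq (edge p x) 0; first by rewrite mulr0 mul0r.
apply: mulr_ge0; first exact: mulr_ge0 (nu_ge0 _) (hw_edge_prob_ge0 x ap).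
exact/IH/admissible_cat.
Qed.

Lemma hw_choice_sum p : admissible p -> \sum_(a < (V p).+1) choice p a = 1.
Proof.
case/andP => cp _; have [->|pn] := eqVneq p [::]; first by rewrite /= big_ord1 /hw_choice.
have p0 : (0 < size p)%N by rewrite lt0n size_eq0.
have := theta_add_gt0 p0; rewrite lt0r => /andP[nz _].
under eq_bigr do rewrite hw_choiceE //.
by rewrite -mulr_suml hw_weight_sum // divff.
Qed.

(* The scalar [c] makes the statement strong enough for the induction on [k]. *)
Lemma esum_hw_edge_prob k p c : admissible p -> 0 <= c ->
  \esum_(x in [set x : seq nat | size x = k]) (c * edge p x)%:E = c%:E.
Proof.
elim: k p c => [|k IH] p c ap c0; first by rewrite esum_size0 /= ?mulr1 // lee_fin mulr1.
rewrite esum_size_succ; last by move=> x; rewrite lee_fin mulr_ge0 ?hw_edge_prob_ge0.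
transitivity (\esum_(a in [set: nat]) (c * choice p a)%:E).
  apply: eq_esum => a _ /=.
  have [h|hc] := eqVneq (choice p a) 0.
    by rewrite h mulr0; apply: esum1 => r _; rewrite mul0r mulr0.
  rewrite -(IH (rcons p a) (c * choice p a)).
  - by apply: eq_esum => r _ /=; rewrite mulrA.
  - exact: admissible_rcons.
  - by rewrite mulr_ge0 ?hw_choice_ge0.
rewrite (esum_nat_finite_support (N := (V p).+1)).
- by rewrite sumEFin -mulr_sumr hw_choice_sum // mulr1.
- by move=> a; rewrite lee_fin mulr_ge0 ?hw_choice_ge0.
- by move=> a ha; rewrite hw_choice_out ?mulr0.
Qed.

Lemma esum_hw_hist_prob_aux j p c : admissible p -> 0 <= c ->
  \esum_(r in [set r : iproc | size r = j]) (c * hist p r)%:E = c%:E.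
Proof.
elim: j p c => [|j IH] p c ap c0; first by rewrite esum_size0 /= ?mulr1 // lee_fin mulr1.
rewrite esum_size_succ; last by move=> x; rewrite lee_fin mulr_ge0 ?hw_hist_prob_aux_ge0.
transitivity (\esum_(x in [set: seq nat]) (c * nu (size x) * edge p x)%:E).
  apply: eq_esum => x _ /=.
  have [h|hx] := eqVneq (edge p x) 0.
    by rewrite h !mulr0; apply: esum1 => r _; rewrite mul0r mulr0.
  rewrite -(IH (p ++ x) (c * nu (size x) * edge p x)).
  - by apply: eq_esum => r _ /=; rewrite !mulrA.
  - exact: admissible_cat.
  - by rewrite !mulr_ge0 ?hw_edge_prob_ge0.
rewrite esum_by_size; last by move=> x; rewrite lee_fin !mulr_ge0 ?hw_edge_prob_ge0.
transitivity (\esum_(k in [set: nat]) (c * nu k)%:E).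
  apply: eq_esum => k _; rewrite -(esum_hw_edge_prob k ap); last exact: mulr_ge0.
  by apply: eq_esum => x /= ->.
by under eq_esum do rewrite EFinM; rewrite esumZl_nat // nu_sum1 mule1.
Qed.

Local Notation P := (hw_hist_prob alpha theta nu).
Local Notation canonical_set := [set h : iproc | canonical (flatten h)]%classic.

Lemma hw_hist_prob_ge0 h : 0 <= P h.
Proof. exact: hw_hist_prob_aux_ge0 h admissible_nil. Qed.

Lemma hw_hist_prob_noncanonical h : ~~ canonical (flatten h) -> P h = 0.
Proof.
by move=> nch; rewrite /hw_hist_prob hw_hist_prob_auxE hw_edge_prob_noncanonical ?mulr0.
Qed.

Lemma esum_hw_hist_prob_canonical (A : set iproc) :
  \esum_(h in A) (P h)%:E = \esum_(h in A `&` canonical_set) (P h)%:E.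
Proof. by apply: esum_restrict => h _ /negP nch; rewrite hw_hist_prob_noncanonical. Qed.

Lemma hw_hist_prob_canonical_perm g h : canonical (flatten h) -> perm_eq g h ->
  P (canonical_rep g) = P h.
Proof.
move=> ch gh; rewrite /hw_hist_prob !hw_hist_prob_auxE /canonical_rep big_map.
under eq_bigr do rewrite size_map.
rewrite (perm_big _ gh) -map_flatten; congr (_ * _).
apply: hw_edge_prob_relabel_perm => //; last by apply: perm_flatten; rewrite perm_sym.
- by rewrite map_flatten; exact: canonical_rep_canonical.
- exact: bij_inj (canonical_relabeling_bij g).
Qed.

Lemma hw_law_canonical n y : size y = n ->
  hw_law alpha theta nu n y = (P (canonical_rep y))%:E.
Proof.
move=> sy; rewrite /hw_law esum_hw_hist_prob_canonical.
rewrite [X in esum X _](_ : _ = [set canonical_rep y]%classic).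
  by rewrite esum_set1 // lee_fin hw_hist_prob_ge0.
apply/seteqP; split => h /=.
  move=> [[_ hy] ch]; apply: same_network_canonical_eq => //; first exact: canonical_rep_canonical.
  exact: same_network_trans hy (same_network_canonical_rep y).
move=> ->; split; last exact: canonical_rep_canonical.
rewrite size_canonical_rep; split => //.
exact: same_network_sym (same_network_canonical_rep y).
Qed.

Lemma esum_hw_hist_prob_prefix n m c : (n <= m)%N -> size c = n ->
  \esum_(h in [set h : iproc | size h = m /\ take n h = c]) (P h)%:E = (P c)%:E.
Proof.
move=> nm sc.
rewrite (reindex_esum [set r : iproc | size r = (m - n)%N] _ (cat c)); last first.
  split=> [r /= sr | r1 r2 _ _ /(congr1 (drop n)) | h /= [sh <-]].
  - by split; [rewrite size_cat sc sr subnKC | rewrite take_size_cat].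
  - by rewrite !drop_size_cat.
  - by exists (drop n h); rewrite ?size_drop ?sh ?cat_take_drop.
under eq_esum do rewrite /hw_hist_prob hw_hist_prob_aux_cat /=.
have [Pc0|Pcn] := eqVneq (P c) 0.
  by rewrite Pc0; apply: esum1 => r _; move: Pc0; rewrite /hw_hist_prob => ->; rewrite mul0r.
apply: esum_hw_hist_prob_aux; last exact: hw_hist_prob_ge0.
rewrite -[flatten c]cat0s; apply: admissible_cat; first exact: admissible_nil.
by apply: contra Pcn; rewrite /hw_hist_prob hw_hist_prob_auxE => /eqP ->; rewrite mulr0.
Qed.

Lemma reorder_class_bij m n L y : perm_eq L (iota 0 m) ->
  set_bij
    ([set h | size h = m /\ same_network (take n (reorder L h)) y] `&` canonical_set)%classic
    ([set h | size h = m /\ take n h = canonical_rep y] `&` canonical_set)%classic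
    (canonical_rep \o reorder L).
Proof.
move=> L_perm; have rep_y := same_network_canonical_rep y.
have take_rep g : same_network (take n g) (take n (canonical_rep g)).
  by rewrite /canonical_rep -map_take; exact/same_network_relabel/canonical_relabeling_bij.
split.
- move=> h [[sh hy] _] /=; split; last exact: canonical_rep_canonical.
  split; first by rewrite size_canonical_rep (size_reorder L_perm).
  apply: same_network_canonical_eq; last first.
  + exact: same_network_trans (same_network_sym (take_rep _)) (same_network_trans hy rep_y).
  + exact: canonical_rep_canonical.
  + exact/canonical_flatten_take/canonical_rep_canonical.
- move=> h1 h2 /set_mem[[s1 _] c1] /set_mem[[s2 _] c2] /= e.
  apply: same_network_canonical_eq c1 c2 _.
  have [rho [rho_bij e12]] : same_network (reorder L h1) (reorder L h2).
    apply: same_network_trans (same_network_canonical_rep _) _.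
    by rewrite e; exact/same_network_sym/same_network_canonical_rep.
  exists rho; split => //; apply: (reorder_inj L_perm) => //; first by rewrite size_map.
  by rewrite reorder_relabel.
- move=> h [[sh th] ch]; have [g sg gh] := reorder_onto L_perm sh; subst h.
  have rho_bij := canonical_relabeling_bij g.
  have reorder_rep :
      reorder L (canonical_rep g) = relabel (canonical_relabeling g) (reorder L g).
    exact: reorder_relabel.
  exists (canonical_rep g); last first.
    apply: same_network_canonical_eq => //=; first exact: canonical_rep_canonical.
    apply: same_network_trans (same_network_sym (same_network_canonical_rep _)) _.
    by rewrite reorder_rep; exact/same_network_sym/same_network_relabel.
  split; last exact: canonical_rep_canonical.
  split; first by rewrite size_canonical_rep.
  rewrite /= reorder_rep -map_take th.
  exact: same_network_sym (same_network_trans rep_y (same_network_relabel _ rho_bij)).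
Qed.

Lemma esum_reorder_class m n L y : perm_eq L (iota 0 m) ->
  \esum_(h in [set h : iproc | size h = m /\ same_network (take n (reorder L h)) y]) (P h)%:E =
  \esum_(h in [set h : iproc | size h = m /\ take n h = canonical_rep y]) (P h)%:E.
Proof.
move=> L_perm; rewrite [LHS]esum_hw_hist_prob_canonical [RHS]esum_hw_hist_prob_canonical.
rewrite (reindex_esum _ _ _ _ (reorder_class_bij n y L_perm)).
apply: eq_esum => h [[sh _] ch] /=.
by rewrite (hw_hist_prob_canonical_perm ch (perm_reorder L_perm sh)).
Qed.

End Hollywood.

Local Open Scope ring_scope.

Theorem theorem5p1 (R : realType) (alpha theta : R) (nu : nat -> R) :
  hw_param alpha theta -> prob_on_pos nu ->
  forall (sigma tau : nat -> nat), cancel sigma tau -> cancel tau sigma ->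
  forall (n m : nat), (forall i, (i < n)%N -> (tau i < m)%N) ->
  forall y : iproc,
    hw_law_perm alpha theta nu tau n m y = hw_law alpha theta nu n y.
Proof.
move=> hp [_ [nu_ge0 nu_sum1]] sigma tau _ tauK n m tau_lt y.
have [L L_perm L_take] := exists_perm_extension (can_inj tauK) tau_lt.
have size_take_reorder h : size (take n (reorder L h)) = n.
  by rewrite -map_take L_take !size_map size_iota.
have nm : (n <= m)%N.
  rewrite -(size_reorder L_perm [::]) -[X in (X <= _)%N](size_take_reorder [::]).
  by rewrite size_take_min geq_minr.
have -> : hw_law_perm alpha theta nu tau n m y =
    \esum_(h in [set h : iproc | size h = m /\ same_network (take n (reorder L h)) y])
      (hw_hist_prob alpha theta nu h)%:E.
  rewrite /hw_law_perm; congr esum; apply/funext => h /=.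
  by rewrite /reorder -map_take L_take -map_comp.
have [sy|sy] := eqVneq (size y) n.
  rewrite esum_reorder_class // (hw_law_canonical hp nu_ge0 sy).
  by apply: esum_hw_hist_prob_prefix; rewrite // size_canonical_rep.
transitivity (0 : \bar R).
  apply: esum1 => h [_ /same_network_size].
  by rewrite size_take_reorder => yn; rewrite yn eqxx in sy.
symmetry; apply: esum1 => h [sh /same_network_size yh].
by rewrite yh sh eqxx in sy.
Qed.
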